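(* Let $\psi_{pl}:\mathbb{R}_{\geq 0}\to\mathbb{R}$ be a non-decreasing concave piecewise linear function with 2 or more (linear) pieces. Then $\psi_{pl}$ is not a neighbor function.
   Context: A neighbor function is a function $\psi:\mathbb{R}_{\geq 0}\to\mathbb{R}$ that is (i) strictly increasing, (ii) continuous, (iii) concave, and (iv) such that $g(x)=\psi(e^{x})$ is convex as a function of $x\in\mathbb{R}$. *)

(* concrete classical reals R. Functions R_{>=0} -> R are modelled
   as f : R -> R, with every property only constrained on [0, +oo). *)
From Stdlib Require Import Reals.
Open Scope R_scope.

Definition strictly_increasing_nonneg (f : R -> R) : Prop :=
  forall x y, 0 <= x -> x < y -> f x < f y.

Definition nondecreasing_nonneg (f : R -> R) : Prop :=
  forall x y, 0 <= x -> x <= y -> f x <= f y.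

Definition continuous_nonneg (f : R -> R) : Prop :=
  forall x, 0 <= x -> limit1_in f (fun y => 0 <= y) (f x) x.

Definition concave_nonneg (f : R -> R) : Prop :=
  forall x y t, 0 <= x -> 0 <= y -> 0 <= t <= 1 ->
    t * f x + (1 - t) * f y <= f (t * x + (1 - t) * y).

Definition convex_R (g : R -> R) : Prop :=
  forall x y t, 0 <= t <= 1 ->
    g (t * x + (1 - t) * y) <= t * g x + (1 - t) * g y.

Definition neighbor_function (psi : R -> R) : Prop :=
  strictly_increasing_nonneg psi /\ continuous_nonneg psi /\
  concave_nonneg psi /\ convex_R (fun x => psi (exp x)).

(* psi is piecewise linear on [0, +oo) with exactly k+1 linear pieces:
   breakpoints 0 = t 0 < t 1 < ... < t k, psi x = a i * x + b i on
   [t i, t (i+1)] for i < k and on [t k, +oo) for i = k, and consecutive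
   pieces have distinct slopes (so each breakpoint is a genuine one). *)
Definition piecewise_linear_pieces (psi : R -> R) (k : nat) : Prop :=
  exists (t a b : nat -> R),
    t 0%nat = 0 /\
    (forall i, (i < k)%nat -> t i < t (S i)) /\
    (forall i, (i < k)%nat -> forall x, t i <= x <= t (S i) -> psi x = a i * x + b i) /\
    (forall x, t k <= x -> psi x = a k * x + b k) /\
    (forall i, (i < k)%nat -> a i <> a (S i)).

(* A concave piecewise linear function with a breakpoint t1 > 0 has a concave
   kink there: its slope drops from a0 to a1 < a0. Composing with exp turns
   slopes at t1 into slopes a0 t1 and a1 t1 at ln t1, so psi (exp x) still has
   a concave kink at ln t1 and cannot be convex. Only concavity and
   condition (iv) are needed. *)

From Stdlib Require Import Reals Lra Psatz Lia.
Open Scope R_scope.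

Lemma nonpos_of_le_small_multiples (x K d : R) :
  0 < d -> (forall e, 0 < e <= d -> x <= K * e) -> x <= 0.
Proof.
  intros Hd Hx; apply Rle_plus_epsilon; intros eps Heps.
  set (e := Rmin d (eps / (Rabs K + 1))).
  pose proof (Rabs_pos K); pose proof (Rle_abs K).
  assert (He : 0 < e) by (apply Rmin_glb_lt; [lra | apply Rdiv_lt_0_compat; lra]).
  assert (He_eps : e * (Rabs K + 1) <= eps).
  { apply (Rle_trans _ (eps / (Rabs K + 1) * (Rabs K + 1))).
    - apply Rmult_le_compat_r; [lra | apply Rmin_r].
    - right; field; lra. }
  pose proof (Hx e (conj He (Rmin_l _ _))); nra.
Qed.

Lemma exp_convex_mean_le (psi : R -> R) (x c : R) :
  convex_R (fun y => psi (exp y)) -> 0 < x -> 0 < c ->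
  2 * psi x <= psi (x / c) + psi (x * c).
Proof.
  intros Hcv Hx Hc.
  assert (Hmid : 1 / 2 * ln (x / c) + (1 - 1 / 2) * ln (x * c) = ln x).
  { unfold Rdiv at 2.
    rewrite ln_mult, ln_Rinv, ln_mult; try apply Rinv_0_lt_compat; lra. }
  pose proof (Hcv (ln (x / c)) (ln (x * c)) (1 / 2) ltac:(lra)) as H.
  simpl in H; rewrite Hmid, !exp_ln in H; [lra | | | lra].
  - apply Rmult_lt_0_compat; lra.
  - apply Rdiv_lt_0_compat; lra.
Qed.

Section Kink.

Variables (psi : R -> R) (t1 u a0 b0 a1 b1 : R).
Hypothesis t1_pos : 0 < t1.
Hypothesis t1_lt_u : t1 < u.
Hypothesis psi_left : forall x, 0 <= x <= t1 -> psi x = a0 * x + b0.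
Hypothesis psi_right : forall x, t1 <= x <= u -> psi x = a1 * x + b1.

Let pieces_agree_at_t1 : a0 * t1 + b0 = a1 * t1 + b1.
Proof. rewrite <- psi_left, <- psi_right; lra. Qed.

Lemma kink_slope_le_of_concave : concave_nonneg psi -> a1 <= a0.
Proof.
  intros Hcc.
  set (q := t1 / u).
  assert (Hq : q * u = t1) by (unfold q; field; lra).
  assert (Hq1 : q < 1) by (apply (Rmult_lt_reg_r u); lra).
  pose proof (Hcc 0 u (1 - q) ltac:(lra) ltac:(lra) ltac:(split; nra)) as H.
  replace ((1 - q) * 0 + (1 - (1 - q)) * u) with t1 in H by lra.
  rewrite (psi_left 0), (psi_left t1), (psi_right u) in H by lra.
  assert (Hkink : 0 <= (a0 - a1) * (t1 * (1 - q))) by nra.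
  assert (0 < t1 * (1 - q)) by nra.
  nra.
Qed.

(* Convexity of psi (exp x) at ln t1, tested on ln (t1 / c) and ln (t1 c),
   yields a0 <= a1 c for every c in (1, u / t1]; let c tend to 1. *)
Lemma kink_slope_le_of_exp_convex :
  convex_R (fun x => psi (exp x)) -> a0 <= a1.
Proof.
  intros Hcv.
  enough (a0 - a1 <= 0) by lra.
  apply (nonpos_of_le_small_multiples _ a1 (u / t1 - 1)).
  { enough (t1 * 1 < t1 * (u / t1)) by nra.
    replace (t1 * (u / t1)) with u by (field; lra); lra. }
  intros e [He Hed].
  set (c := 1 + e).
  assert (Hcu : t1 * c <= u).
  { assert (e * t1 <= (u / t1 - 1) * t1) by (apply Rmult_le_compat_r; lra).
    replace ((u / t1 - 1) * t1) with (u - t1) in * by (field; lra).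
    unfold c; lra. }
  assert (Hdiv : t1 / c * c = t1) by (field; unfold c; lra).
  assert (Hdiv_pos : 0 < t1 / c) by (apply Rdiv_lt_0_compat; unfold c; lra).
  pose proof (exp_convex_mean_le psi t1 c Hcv t1_pos ltac:(unfold c; lra)) as H.
  rewrite (psi_left (t1 / c)), (psi_right t1), (psi_right (t1 * c)) in H
    by (unfold c in *; nra).
  set (w := t1 / c) in *.
  assert (Hkey : a0 * (w * e) <= (a1 * c) * (w * e)).
  { rewrite <- Hdiv in H, pieces_agree_at_t1; unfold c in *; nra. }
  apply Rmult_le_reg_r in Hkey; [unfold c in Hkey; lra | nra].
Qed.

End Kink.

Lemma piecewise_linear_first_kink (psi : R -> R) (k : nat) :
  piecewise_linear_pieces psi k -> (1 <= k)%nat ->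
  exists t1 u a0 b0 a1 b1, 0 < t1 < u /\
    (forall x, 0 <= x <= t1 -> psi x = a0 * x + b0) /\
    (forall x, t1 <= x <= u -> psi x = a1 * x + b1) /\ a0 <> a1.
Proof.
  intros [t [a [b [t0 [t_incr [psi_piece [psi_last slopes]]]]]]] Hk.
  assert (Ht1 : 0 < t 1%nat) by (rewrite <- t0; apply t_incr; lia).
  assert (psi_first : forall x, 0 <= x <= t 1%nat -> psi x = a 0%nat * x + b 0%nat).
  { intros x Hx; apply psi_piece; [lia | rewrite t0; lra]. }
  assert (Hslopes : a 0%nat <> a 1%nat) by (apply slopes; lia).
  destruct (Nat.eq_dec k 1) as [-> | Hk2].
  - exists (t 1%nat), (t 1%nat + 1), (a 0%nat), (b 0%nat), (a 1%nat), (b 1%nat).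
    repeat split; try lra; auto.
    intros x Hx; apply psi_last; lra.
  - assert (Ht2 : t 1%nat < t 2%nat) by (apply t_incr; lia).
    exists (t 1%nat), (t 2%nat), (a 0%nat), (b 0%nat), (a 1%nat), (b 1%nat).
    repeat split; try lra; auto.
    intros x Hx; apply psi_piece; [lia | lra].
Qed.

Theorem theoremF1 (psi : R -> R) (k : nat) :
  nondecreasing_nonneg psi ->
  concave_nonneg psi ->
  piecewise_linear_pieces psi k ->
  (1 <= k)%nat ->
  ~ neighbor_function psi.
Proof.
  intros _ Hcc Hpl Hk [_ [_ [_ Hcv]]].
  destruct (piecewise_linear_first_kink psi k Hpl Hk)
    as (t1 & u & a0 & b0 & a1 & b1 & [Ht1 Hu] & Hleft & Hright & Hslopes).
  apply Hslopes, Rle_antisym.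
  - exact (kink_slope_le_of_exp_convex psi t1 u a0 b0 a1 b1 Ht1 Hu Hleft Hright Hcv).
  - exact (kink_slope_le_of_concave psi t1 u a0 b0 a1 b1 Ht1 Hu Hleft Hright Hcc).
Qed.
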